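(* Let $s$ be a Sturmian word having a factorization $s=U_1U_2\cdots U_n\cdots$ where each $U_i$ ($i\ge1$) is a non-empty prefix of $s$, and let $c$ be the first letter of $s$. Then $U_1\neq c^p$ for every integer $p\ge 1$.
   Context: A Sturmian word is an infinite word $s\in\{a,b\}^{\omega}$ that is aperiodic (not ultimately periodic) and balanced: for all factors $u,v$ of $s$ with $|u|=|v|$ one has $||u|_x-|v|_x|\le 1$ for $x\in\{a,b\}$, where $|u|_x$ is the number of occurrences of $x$ in $u$. *)

From HB Require Import structures.
From mathcomp Require Import all_boot.
Set Implicit Arguments. Unset Strict Implicit. Unset Printing Implicit Defensive.

Inductive letter := la | lb.
Definition letter_eqb (x y : letter) : bool :=
  match x, y with la, la | lb, lb => true | _, _ => false end.
Lemma letter_eqP : Equality.axiom letter_eqb.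
Proof. by case; case; constructor. Qed.
HB.instance Definition _ := hasDecEq.Build letter letter_eqP.

Definition word := nat -> letter.

Definition factor (s : word) (i n : nat) : seq letter :=
  [seq s (i + k) | k <- iota 0 n].

Definition word_prefix (s : word) (n : nat) : seq letter := factor s 0 n.

Definition occ (x : letter) (u : seq letter) : nat := count_mem x u.

Definition balanced (s : word) : Prop :=
  forall (i j n : nat) (x : letter),
    occ x (factor s i n) <= occ x (factor s j n) + 1.

Definition ultimately_periodic (s : word) : Prop :=
  exists p N : nat, 0 < p /\ forall n, N <= n -> s (n + p) = s n.

Definition sturmian (s : word) : Prop :=
  ~ ultimately_periodic s /\ balanced s.

(* starting position of U_i in U_0 U_1 U_2 ... (0-indexed blocks) *)
Definition block_start (U : nat -> seq letter) (i : nat) : nat :=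
  \sum_(j < i) size (U j).

(* s = U_0 U_1 U_2 ... (all blocks non-empty, so they cover s) *)
Definition is_factorization (s : word) (U : nat -> seq letter) : Prop :=
  (forall i, 0 < size (U i)) /\
  (forall i, factor s (block_start U i) (size (U i)) = U i).

From mathcomp Require Import all_boot.
From mathcomp Require Import zify.
From Stdlib Require Classical_Prop.

(* Let c = s 0.  Since s is not ultimately periodic it is not constant, so
   there is a least position m with s m <> c.  In a factorization of s into
   prefixes of s, every block U_i read at its starting position reproduces
   s itself: s (start_i + k) = s k.  If m lay in a block U_i with i > 0,
   then s m = s (m - start_i) with m - start_i < m, which equals c by
   minimality of m -- a contradiction.  Hence m lies in the first block
   U_0, so U_0 contains a letter different from c and cannot be c^p. *)

Lemma nth_factor (s : word) (i n k : nat) :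
  k < n -> nth la (factor s i n) k = s (i + k).
Proof. by move=> kn; rewrite /factor (nth_map 0) ?size_iota // nth_iota. Qed.

Lemma block_startS (U : nat -> seq letter) (i : nat) :
  block_start U i.+1 = block_start U i + size (U i).
Proof. by rewrite /block_start big_ord_recr. Qed.

Lemma block_start0 (U : nat -> seq letter) : block_start U 0 = 0.
Proof. by rewrite /block_start big_ord0. Qed.

(* A constant word is periodic, so an aperiodic word changes letter. *)
Lemma not_periodic_letter_change {s : word} :
  ~ ultimately_periodic s -> exists n, s n != s 0.
Proof.
move=> aper; apply: Classical_Prop.NNPP => no_change; apply: aper.
have const m : s m = s 0.
  by apply/eqP; apply: contraT => ne; case: no_change; exists m.
by exists 1, 0; split=> // n _; rewrite !const.
Qed.

Section PrefixFactorization.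

Variables (s : word) (U : nat -> seq letter).
Hypothesis U_fact : is_factorization s U.
Hypothesis U_prefix : forall i, U i = word_prefix s (size (U i)).

(* Since the blocks are non-empty, every position lies in some block. *)
Lemma position_in_block (m : nat) :
  exists i, block_start U i <= m < block_start U i.+1.
Proof.
have [U_pos _] := U_fact.
elim: m => [|m [i /andP [lo hi]]].
  by exists 0; rewrite block_startS block_start0 U_pos.
case: (ltnP m.+1 (block_start U i.+1)) => hi'.
  by exists i; rewrite hi' andbT ltnW.
by exists i.+1; rewrite (block_startS U i.+1); have := U_pos i.+1; lia.
Qed.

(* Each block, being a prefix of s, repeats s from its starting position. *)
Lemma block_repeats_prefix {i k : nat} :
  k < size (U i) -> s (block_start U i + k) = s k.
Proof.
move=> lt_k; have [_ U_fac] := U_fact.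
rewrite -(@nth_factor s _ _ _ lt_k) U_fac {1}U_prefix /word_prefix nth_factor //.
Qed.

Lemma first_change_in_first_block {m : nat} :
  s m != s 0 -> (forall n, n < m -> s n = s 0) -> m < size (U 0).
Proof.
move=> change before; have [U_pos _] := U_fact.
have [[|i] /andP [lo hi]] := position_in_block m.
  by rewrite block_startS block_start0 in hi.
have start_pos : 0 < block_start U i.+1.
  by rewrite block_startS; have := U_pos i; lia.
have in_block : m - block_start U i.+1 < size (U i.+1).
  by move: hi; rewrite (block_startS U i.+1); lia.
have := block_repeats_prefix in_block; rewrite subnKC // => shift.
by move: change; rewrite shift before ?eqxx //; lia.
Qed.

End PrefixFactorization.

Theorem mainTheorem4 (s : word) (U : nat -> seq letter) :
  sturmian s ->
  is_factorization s U ->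
  (forall i, U i = word_prefix s (size (U i))) ->
  forall p : nat, 1 <= p -> U 0 <> nseq p (s 0).
Proof.
move=> [aper _] U_fact U_prefix p _ U0_power.
have [m change minimal] := ex_minnP (not_periodic_letter_change aper).
have before n : n < m -> s n = s 0.
  move=> lt_nm; apply/eqP; apply: contraTT lt_nm => ne.
  by rewrite -leqNgt minimal.
have in_U0 := first_change_in_first_block s U U_fact U_prefix change before.
have [_ U_fac] := U_fact.
have U0_m : nth la (U 0) m = s m.
  by rewrite -[in LHS](U_fac 0) block_start0 nth_factor.
move: in_U0 change; rewrite -U0_m U0_power size_nseq nth_nseq => ->.
by rewrite eqxx.
Qed.
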